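(* Let $F$ be a field of characteristic zero and let $n,m$ be natural numbers, and let $r\le n$, $s\le m$ be natural numbers. Then each of the Lie algebras $W(n,m)$, $W(n,m,r,s)$ and $W^*(n,m)$ (defined in the context) is a simple Lie algebra.
   Context: Let $A_{n,m}$ be the commutative $F$-algebra with $F$-basis the symbols $e^{\alpha}x^{\beta}=e^{a_1x_1}\cdots e^{a_nx_n}x_1^{b_1}\cdots x_{n+m}^{b_{n+m}}$, $\alpha=(a_1,\dots,a_n)\in\mathbb Z^n$, $\beta=(b_1,\dots,b_{n+m})\in\mathbb Z^{n+m}$, with multiplication $e^{\alpha}x^{\beta}\cdot e^{\gamma}x^{\delta}=e^{\alpha+\gamma}x^{\beta+\delta}$. For $1\le i\le n+m$ let $\partial_i$ be the derivation of $A_{n,m}$ with $\partial_i(e^{\alpha}x^{\beta})=a_i e^{\alpha}x^{\beta}+b_i e^{\alpha}x^{\beta-\epsilon_i}$, where $a_i:=0$ for $i>n$ and $\epsilon_i$ is the $i$-th unit vector. $W(n,m)$ is the Lie algebra with basis $\{e^{\alpha}x^{\beta}\partial_i:\alpha\in\mathbb Z^n,\beta\in\mathbb Z^{n+m},1\le i\le n+m\}$ and bracket $[f\partial_i,g\partial_j]=f\,\partial_i(g)\,\partial_j-g\,\partial_j(f)\,\partial_i$ for $f,g\in A_{n,m}$. $W^*(n,m)$ is the subalgebra spanned by the basis elements $e^{\alpha}x^{\beta}\partial_i$ with $\beta\in\mathbb N^{n+m}$ ($\mathbb N$ the nonnegative integers). $W(n,m,r,s)$ is the subalgebra spanned by the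 basis elements $e^{\alpha}x^{\beta}\partial_k$ ($\alpha\in\mathbb Z^n$, $1\le k\le n+m$) such that $b_1,\dots,b_r\in\mathbb Z$, $b_{r+1},\dots,b_n\in\mathbb N$, $b_{n+1},\dots,b_{n+s}\in\mathbb Z$, $b_{n+s+1},\dots,b_{n+m}\in\mathbb N$. *)

From HB Require Import structures.
From mathcomp Require Import all_boot all_order all_algebra.
From mathcomp Require Import finmap.
From mathcomp.multinomials Require Import monalg.

Set Implicit Arguments.
Unset Strict Implicit.
Unset Printing Implicit Defensive.

Import GRing.Theory.
Local Open Scope ring_scope.

(* Index set of the standard basis e^alpha x^beta \partial_i of W(n,m).
   alpha : Z^n, beta : Z^(n+m), i : {0,..,n+m-1} (0-based). *)
Definition Widx (n m : nat) : Type :=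
  ({ffun 'I_n -> int} * {ffun 'I_(n + m) -> int} * 'I_(n + m))%type.

Definition Walg (F : fieldType) (n m : nat) := {malg F[Widx n m]}.

(* a_i for i : 'I_(n+m), with a_i := 0 when i >= n *)
Definition acoef (n m : nat) (alpha : {ffun 'I_n -> int}) (i : 'I_(n + m)) : int :=
  if @insub nat (fun k => (k < n)%N) _ (val i) is Some k then alpha k else 0.

Definition addv (k : nat) (u v : {ffun 'I_k -> int}) : {ffun 'I_k -> int} :=
  [ffun t => u t + v t].

Definition subeps (k : nat) (v : {ffun 'I_k -> int}) (i : 'I_k) : {ffun 'I_k -> int} :=
  [ffun t => v t - (t == i)%:Z].

Definition Wbasis (F : fieldType) (n m : nat) (alpha : {ffun 'I_n -> int})
  (beta : {ffun 'I_(n + m) -> int}) (i : 'I_(n + m)) : Walg F n m :=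
  << (alpha, beta, i) >>.

(* [e^a x^b d_i, e^c x^d d_j]
   = e^a x^b d_i(e^c x^d) d_j - e^c x^d d_j(e^a x^b) d_i, with
   d_i(e^c x^d) = c_i e^c x^d + d_i e^c x^(d - eps_i). *)
Definition Wbr_basis (F : fieldType) (n m : nat) (p q : Widx n m) : Walg F n m :=
  let: (alpha, beta, i) := p in
  let: (gamma, delta, j) := q in
  let ag := addv alpha gamma in
  let bd := addv beta delta in
    (acoef gamma i)%:~R *: Wbasis F ag bd j
  + (delta i)%:~R *: Wbasis F ag (subeps bd i) j
  - (acoef alpha j)%:~R *: Wbasis F ag bd i
  - (beta j)%:~R *: Wbasis F ag (subeps bd j) i.

Definition Wbr (F : fieldType) (n m : nat) (f g : Walg F n m) : Walg F n m :=
  \sum_(p <- enum_fset (msupp f)) \sum_(q <- enum_fset (msupp g))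
     (f@_p * g@_q) *: Wbr_basis F p q.

Definition Wsub (F : fieldType) (n m : nat) (P : pred (Widx n m)) (f : Walg F n m) : Prop :=
  forall p, p \in msupp f -> P p.

Definition Pfull (n m : nat) : pred (Widx n m) := fun _ => true.

(* W^*(n,m): beta in N^(n+m) *)
Definition Pstar (n m : nat) : pred (Widx n m) :=
  fun p => [forall k, 0 <= p.1.2 k].

(* W(n,m,r,s): b_1..b_r in Z, b_(r+1)..b_n in N, b_(n+1)..b_(n+s) in Z,
   b_(n+s+1)..b_(n+m) in N.  In 0-based indices: b_k >= 0 whenever
   r <= k < n or n + s <= k. *)
Definition Prs (n m r s : nat) : pred (Widx n m) :=
  fun p => [forall k : 'I_(n + m),
              ((r <= k < n)%N || (n + s <= k)%N) ==> (0 <= p.1.2 k)].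

Definition Wideal (F : fieldType) (n m : nat) (P : pred (Widx n m))
  (J : Walg F n m -> Prop) : Prop :=
  [/\ (forall x, J x -> Wsub P x),
      J 0,
      (forall x y, J x -> J y -> J (x + y)),
      (forall (c : F) x, J x -> J (c *: x)) &
      (forall x y, Wsub P x -> J y -> J (Wbr x y))].

Definition Wsimple (F : fieldType) (n m : nat) (P : pred (Widx n m)) : Prop :=
  [/\ (forall x y : Walg F n m, Wsub P x -> Wsub P y -> Wsub P (Wbr x y)),
      (exists x y : Walg F n m, [/\ Wsub P x, Wsub P y & Wbr x y != 0]) &
      (forall J : Walg F n m -> Prop, Wideal P J ->
         (forall x, J x <-> x = 0) \/ (forall x, J x <-> Wsub P x))].

(* Each of the three algebras is the span L_T of the e^a x^b d_k with b_k >= 0 for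
   k in a fixed set T of coordinates, so it suffices to show that L_T is simple.
   A nonzero ideal J of L_T is stable under ad d_j - c and under ad x_j^t d_j for
   t >= 0.  One coordinate at a time, ad x_j^t d_j makes all x_j-exponents of a
   nonzero element of J nonnegative, a product of powers (ad d_j - c)^(d+1) keeps
   a single eigenvalue a_j of ad d_j, and (ad d_j - a_j)^d lowers the x_j-degree
   to 0.  This yields a nonzero element sum_k c_k e^g d_k of J; bracketing with
   e^-g d_i and then with x_k d_k puts some d_k in J.  Finally, bracketing
   e^a x^b d_k with d_k and with x_k d_k expresses it through basis elements whose
   b_k is closer to 0, so J contains every basis element of L_T.  Characteristic 0
   makes all the integer coefficients that occur invertible. *)

From Pilot Require Import Defs.
From HB Require Import structures.
From mathcomp Require Import all_boot all_order all_algebra.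
From mathcomp Require Import finmap.
From mathcomp.multinomials Require Import monalg.
From mathcomp Require Import ring zify.
From Stdlib Require Import Classical.
(* [all_algebra] also exports an [addv]; this makes [Defs.addv] the visible one. *)
Import Defs.

Set Implicit Arguments.
Unset Strict Implicit.
Unset Printing Implicit Defensive.
Import GRing.Theory Order.TTheory.
Local Open Scope ring_scope.

Definition zerov (k : nat) : {ffun 'I_k -> int} := [ffun _ => 0].

Definition oppv (k : nat) (v : {ffun 'I_k -> int}) : {ffun 'I_k -> int} := [ffun t => - v t].

Definition shiftv (k : nat) (j : 'I_k) (t : int) (v : {ffun 'I_k -> int}) :
  {ffun 'I_k -> int} := [ffun i => v i + (i == j)%:Z * t].

Section ExponentVectors.
Variable k : nat.
Implicit Types (u v : {ffun 'I_k -> int}) (j : 'I_k) (t : int).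

Lemma zerovE i : zerov k i = 0.
Proof. by rewrite ffunE. Qed.

Lemma add0v v : addv (zerov k) v = v.
Proof. by apply/ffunP => i; rewrite !ffunE add0r. Qed.

Lemma addv0 v : addv v (zerov k) = v.
Proof. by apply/ffunP => i; rewrite !ffunE addr0. Qed.

Lemma addv_shiftv0 v j t : addv v (shiftv j t (zerov k)) = shiftv j t v.
Proof. by apply/ffunP => i; rewrite !ffunE add0r. Qed.

Lemma addv_shiftv0l v j t : addv (shiftv j t (zerov k)) v = shiftv j t v.
Proof. by apply/ffunP => i; rewrite !ffunE add0r addrC. Qed.

Lemma addNv v : addv (oppv v) v = zerov k.
Proof. by apply/ffunP => i; rewrite !ffunE addNr. Qed.

Lemma subepsE v j : subeps v j = shiftv j (-1) v.
Proof. by apply/ffunP => i; rewrite !ffunE mulrN1. Qed.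

Lemma shiftvA j t1 t2 v : shiftv j t1 (shiftv j t2 v) = shiftv j (t2 + t1) v.
Proof. by apply/ffunP => i; rewrite !ffunE mulrDr addrA. Qed.

Lemma shiftv0 j v : shiftv j 0 v = v.
Proof. by apply/ffunP => i; rewrite !ffunE mulr0 addr0. Qed.

Lemma shiftvE j t v i : shiftv j t v i = v i + (i == j)%:Z * t.
Proof. by rewrite ffunE. Qed.

Lemma shiftv_id j t v : shiftv j t v j = v j + t.
Proof. by rewrite ffunE eqxx mul1r. Qed.

Lemma shiftvK j t v : shiftv j (- t) (shiftv j t v) = v.
Proof. by rewrite shiftvA subrr shiftv0. Qed.

End ExponentVectors.

Lemma acoef0 (n m : nat) (i : 'I_(n + m)) : acoef (zerov n) i = 0.
Proof. by rewrite /acoef; case: insub => // k; rewrite ffunE. Qed.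

Lemma acoef_lshift (n m : nat) (alpha : {ffun 'I_n -> int}) (t : 'I_n) :
  acoef alpha (lshift m t) = alpha t.
Proof. by rewrite /acoef insubT /= ?ltn_ord // => h; congr (alpha _); apply: val_inj. Qed.

Lemma acoefN (n m : nat) (alpha : {ffun 'I_n -> int}) (i : 'I_(n + m)) :
  acoef (oppv alpha) i = - acoef alpha i.
Proof. by rewrite /acoef; case: insub => [k|]; rewrite ?ffunE ?oppr0. Qed.

Section BasisCalculus.
Variables (F : fieldType) (n m : nat).
Local Notation W := (Walg F n m).
Local Notation I := (Widx n m).
Local Notation N := (n + m)%N.

Definition bas (p : I) : W := locked (<<p>> : W).

Lemma mcoeffZW (c : F) (g : W) (P : I) : (c *: g)@_P = c * g@_P.
Proof. exact: mcoeffZ. Qed.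

Lemma mcoeff_sum (s : seq I) (f : I -> W) (P : I) :
  (\sum_(q <- s) f q)@_P = \sum_(q <- s) (f q)@_P.
Proof. exact: raddf_sum. Qed.

Lemma mcoeff_bas (p P : I) : (bas p)@_P = (p == P)%:R.
Proof. by rewrite /bas -lock mcoeffU. Qed.

Lemma WbasisE a b i : Wbasis F a b i = bas (a, b, i).
Proof. by rewrite /bas -lock. Qed.

Lemma Wbr_basl (p : I) (x : W) :
  Wbr (bas p) x = \sum_(q <- msupp x) x@_q *: Wbr_basis F p q.
Proof.
rewrite /Wbr /bas -lock msuppU oner_eq0 big_seq_fset1.
by apply: eq_bigr => q _; rewrite mcoeffU eqxx mul1r.
Qed.

Lemma Wbr_bas (p q : I) : Wbr (bas p) (bas q) = Wbr_basis F p q.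
Proof.
by rewrite Wbr_basl {1}/bas -lock msuppU oner_eq0 big_seq_fset1 mcoeff_bas eqxx scale1r.
Qed.

Lemma mcoeff_Wbr_basis a b i g d k (P : I) :
  (Wbr_basis F (a, b, i) (g, d, k))@_P =
    (if (addv a g, addv b d, k) == P then (acoef g i)%:~R else 0)
  + (if (addv a g, shiftv i (-1) (addv b d), k) == P then (d i)%:~R else 0)
  - (if (addv a g, addv b d, i) == P then (acoef a k)%:~R else 0)
  - (if (addv a g, shiftv k (-1) (addv b d), i) == P then (b k)%:~R else 0).
Proof.
rewrite /Wbr_basis !WbasisE !subepsE !mcoeffB mcoeffD.
(* Coq's [erewrite] matches syntactically; ssreflect's [rewrite] tries to unify
   the scalars up to conversion here and does not terminate in reasonable time. *)
repeat erewrite mcoeffZW; repeat erewrite mcoeff_bas.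
by rewrite !mulr_natr !mulrb.
Qed.

Lemma sum_msupp_pred1 (x : W) (G : I -> F) (a : I) :
  \sum_(q <- msupp x) (if q == a then x@_q * G q else 0) = x@_a * G a.
Proof.
case: (boolP (a \in msupp x)) => ha.
  by rewrite (bigD1_seq a) ?fset_uniq //= eqxx big1 ?addr0 // => q /negbTE ->.
rewrite big1_seq ?(mcoeff_outdom ha) ?mul0r // => q /andP [_ qs].
by case: eqP qs ha => // -> ->.
Qed.

(* For an index P = (alpha, beta, i) of e^alpha x^beta d_i: xdeg j P is b_j, edeg j P
   is a_j, and shift j t P is the index with beta replaced by beta + t eps_j. *)
Definition shift (j : 'I_N) (t : int) (P : I) : I := (P.1.1, shiftv j t P.1.2, P.2).
Definition xdeg (j : 'I_N) (P : I) : int := P.1.2 j.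
Definition edeg (j : 'I_N) (P : I) : int := acoef P.1.1 j.

Lemma shiftA j t1 t2 P : shift j t1 (shift j t2 P) = shift j (t2 + t1) P.
Proof. by rewrite /shift /= shiftvA. Qed.

Lemma shift0 j P : shift j 0 P = P.
Proof. by case: P => [[a b] k]; rewrite /shift /= shiftv0. Qed.

Lemma shiftK j t P : shift j (- t) (shift j t P) = P.
Proof. by rewrite shiftA subrr shift0. Qed.

Lemma shiftv_eq a b k j t P :
  ((a, shiftv j t b, k) == P :> I) = ((a, b, k) == shift j (- t) P).
Proof.
apply/eqP/eqP => [<-|E]; first by rewrite /shift /= shiftvK.
by rewrite -[P](shiftK j (- t)) -E opprK.
Qed.

Lemma xdeg_shift i j t P : xdeg i (shift j t P) = xdeg i P + (i == j)%:Z * t.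
Proof. by rewrite /xdeg /shift /= ffunE. Qed.

Lemma xdeg_shift_id j t P : xdeg j (shift j t P) = xdeg j P + t.
Proof. by rewrite xdeg_shift eqxx mul1r. Qed.

Lemma xdeg_shift_ne i j t P : i != j -> xdeg i (shift j t P) = xdeg i P.
Proof. by move=> /negbTE ij; rewrite xdeg_shift ij mul0r addr0. Qed.

Definition del (j : 'I_N) : W := bas (zerov n, zerov N, j).
Definition xdel (j : 'I_N) (t : int) : W := bas (zerov n, shiftv j t (zerov N), j).

Lemma mcoeff_Wbr_del j x P :
  (Wbr (del j) x)@_P = (edeg j P)%:~R * x@_P + (xdeg j P + 1)%:~R * x@_(shift j 1 P).
Proof.
rewrite Wbr_basl mcoeff_sum.
transitivity (\sum_(q <- msupp x)
   ((if q == P then x@_q * (edeg j q)%:~R else 0) +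
    (if q == shift j 1 P then x@_q * (xdeg j q)%:~R else 0))).
  apply: eq_bigr => -[[g d] k] _.
  rewrite mcoeffZW mcoeff_Wbr_basis !add0v acoef0 zerovE mulr0z !if_same !subr0.
  rewrite shiftv_eq opprK mulrDr.
  by congr (_ + _); case: ifP; rewrite ?mulr0.
by rewrite big_split /= !sum_msupp_pred1 xdeg_shift_id !(mulrC (x@__)).
Qed.

Lemma mcoeff_Wbr_xdel j t x P :
  (Wbr (xdel j t) x)@_P = (edeg j P)%:~R * x@_(shift j (- t) P)
     + (xdeg j P + (1 - t) - (P.2 == j)%:Z * t)%:~R * x@_(shift j (1 - t) P).
Proof.
rewrite Wbr_basl mcoeff_sum.
transitivity (\sum_(q <- msupp x)
   ((if q == shift j (- t) P then x@_q * (edeg j q)%:~R else 0) +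
    (if q == shift j (1 - t) P then x@_q * (xdeg j q - (q.2 == j)%:Z * t)%:~R else 0))).
  apply: eq_bigr => -[[g d] k] _.
  rewrite mcoeffZW mcoeff_Wbr_basis add0v addv_shiftv0l acoef0 mulr0z if_same subr0.
  have E : - (t + -1) = 1 - t by ring.
  case: (eqVneq k j) => [->|kj].
    rewrite shiftvA shiftv_id ffunE add0r !shiftv_eq E /xdeg /edeg /= ?eqxx ?mul1r.
    by case: ifP => _; case: ifP => _; ring.
  rewrite shiftvA shiftvE ffunE (negbTE kj) mul0r add0r mulr0z if_same subr0 !shiftv_eq E.
  rewrite /xdeg /edeg /=.
  by case: ifP => _; case: ifP => _; ring.
by rewrite big_split /= !sum_msupp_pred1 xdeg_shift_id !(mulrC (x@__)).
Qed.

Lemma malgU_bas (c : F) (p : I) : << c *g p >> = c *: bas p.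
Proof. by apply/malgP => P; rewrite mcoeffU mcoeffZW mcoeff_bas mulr_natr. Qed.

Lemma mcoeff_Wbr_bas_del a b i j P :
  (Wbr (bas (a, b, i)) (del j))@_P =
    (if (a, b, i) == P then (- acoef a j)%:~R else 0)
  + (if (a, shiftv j (-1) b, i) == P then (- b j)%:~R else 0).
Proof.
rewrite Wbr_bas mcoeff_Wbr_basis !addv0 acoef0 zerovE mulr0z !if_same add0r sub0r.
by case: ifP; case: ifP; rewrite ?mulrNz ?oppr0 ?subr0 ?sub0r ?opprD.
Qed.

Lemma mcoeff_Wbr_bas_xdel1 a b k P :
  (Wbr (bas (a, b, k)) (xdel k 1))@_P =
    (if (a, b, k) == P then (1 - b k)%:~R else 0)
  + (if (a, shiftv k 1 b, k) == P then (- acoef a k)%:~R else 0).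
Proof.
rewrite Wbr_bas mcoeff_Wbr_basis addv0 addv_shiftv0 acoef0 mulr0z if_same add0r shiftvK.
rewrite shiftv_id zerovE add0r.
case: ifP; case: ifP; rewrite ?mulrNz ?intrB ?oppr0 ?subr0 ?sub0r ?add0r ?addr0 //.
by rewrite addrAC.
Qed.

Lemma mcoeff_Wbr_basis_expN gamma i k P :
  (Wbr_basis F (oppv gamma, zerov N, i) (gamma, zerov N, k))@_P =
    (if (zerov n, zerov N, k) == P then (acoef gamma i)%:~R else 0)
  + (if (zerov n, zerov N, i) == P then (acoef gamma k)%:~R else 0).
Proof.
rewrite mcoeff_Wbr_basis addNv addv0 !zerovE !mulr0z !if_same !subr0 addr0 acoefN mulrNz.
by case: ifP => _; case: ifP => _; rewrite ?opprK ?oppr0 ?subr0.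
Qed.

End BasisCalculus.

Arguments bas {F n m} p.
Arguments del {F n m} j.
Arguments xdel {F n m} j t.

Lemma intr_pchar0_neq0 (F : fieldType) (z : int) :
  [pchar F] =i pred0 -> z != 0 -> (z%:~R : F) != 0.
Proof.
move=> /pcharf0P natr_eq0.
by case: z => k nz; rewrite ?NegzE ?mulrNz ?oppr_eq0 /= natr_eq0 //; apply: contra nz => /eqP ->.
Qed.

Lemma seq_max_exists (T : eqType) (f : T -> int) (s : seq T) : s != [::] ->
  exists2 q, q \in s & forall p, p \in s -> f p <= f q.
Proof.
elim: s => // a s IH _.
have [->|/IH [q qs qmax]] := eqVneq s [::].
  by exists a => [|p]; rewrite ?inE // => /eqP ->.
have [aq|qa] := leP (f a) (f q).
  by exists q => [|p]; rewrite inE ?qs ?orbT // => /orP [/eqP ->|/qmax].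
exists a => [|p]; rewrite inE ?eqxx // => /orP [/eqP ->|/qmax fq] //.
exact: le_trans fq (ltW qa).
Qed.

Lemma iter_invariant (T : Type) (R : T -> Prop) (f : T -> T) k x :
  (forall y, R y -> R (f y)) -> R x -> R (iter k f x).
Proof. by move=> Rf Rx; elim: k => //= k IH; apply: Rf. Qed.

Section Supports.
Variables (F : fieldType) (n m : nat).
Local Notation W := (Walg F n m).
Local Notation I := (Widx n m).

Definition supported (Q : I -> Prop) (x : W) : Prop := forall P, x@_P != 0 -> Q P.

Lemma Wsub_supported (Q : pred I) (x : W) : Wsub Q x <-> supported Q x.
Proof. by split => h p; [rewrite mcoeff_neq0|rewrite -mcoeff_neq0]; apply: h. Qed.

Lemma supported0 (Q : I -> Prop) : supported Q 0.
Proof. by move=> P; rewrite mcoeff0 eqxx. Qed.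

Lemma supportedD (Q : I -> Prop) (x y : W) :
  supported Q x -> supported Q y -> supported Q (x + y).
Proof.
move=> hx hy P; rewrite mcoeffD.
by case: (eqVneq x@_P 0) => [->|/hx //]; rewrite add0r; apply: hy.
Qed.

Lemma supportedN (Q : I -> Prop) (x : W) : supported Q x -> supported Q (- x).
Proof. by move=> hx P; rewrite mcoeffN oppr_eq0; apply: hx. Qed.

Lemma supportedZ (Q : I -> Prop) (c : F) (x : W) : supported Q x -> supported Q (c *: x).
Proof.
move=> hx P; rewrite mcoeffZW.
by case: (eqVneq x@_P 0) => [->|/hx //]; rewrite mulr0 eqxx.
Qed.

Lemma supported_sum (Q : I -> Prop) (s : seq I) (f : I -> W) :
  (forall q, q \in s -> supported Q (f q)) -> supported Q (\sum_(q <- s) f q).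
Proof.
elim: s => [|a s IH] h; first by rewrite big_nil; apply: supported0.
rewrite big_cons; apply: supportedD; first by apply: h; rewrite inE eqxx.
by apply: IH => q qs; apply: h; rewrite inE qs orbT.
Qed.

Lemma supported_bas (Q : I -> Prop) p : Q p -> supported Q (bas p).
Proof. by move=> Qp P; rewrite mcoeff_bas; case: (eqVneq p P) => [<- //|_]; rewrite eqxx. Qed.

Lemma supportedZ_bas (Q : I -> Prop) (c : F) p : (c != 0 -> Q p) -> supported Q (c *: bas p).
Proof.
move=> Qp P; rewrite mcoeffZW mcoeff_bas.
by case: (eqVneq p P) => [<-|_]; rewrite ?mulr1 // mulr0 eqxx.
Qed.

Lemma supported_mcoeff2 (Q : I -> Prop) (x y : W) (a b : I -> F) (f g : I -> I) :
  (forall P, y@_P = a P * x@_(f P) + b P * x@_(g P)) ->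
  (forall P, Q (f P) -> Q P) -> (forall P, Q (g P) -> Q P) -> supported Q x -> supported Q y.
Proof.
move=> Ey Qf Qg Qx P; rewrite Ey.
case: (eqVneq x@_(f P) 0) => [->|/Qx /Qf //]; rewrite mulr0 add0r.
by case: (eqVneq x@_(g P) 0) => [->|/Qx /Qg //]; rewrite mulr0 eqxx.
Qed.

Lemma mcoeff_eq0_supported (Q : I -> Prop) (x : W) P : supported Q x -> ~ Q P -> x@_P = 0.
Proof. by move=> Hx QP; case: (eqVneq x@_P 0) => // /Hx /QP. Qed.

Lemma mcoeff_neq0_nonzero (x : W) P : x@_P != 0 -> x != 0.
Proof. by apply: contra => /eqP ->; rewrite mcoeff0. Qed.

Lemma exists_mcoeff_max (x : W) (f : I -> int) : x != 0 ->
  exists2 q, x@_q != 0 & forall P, x@_P != 0 -> f P <= f q.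
Proof.
move=> nz; have [|q qs qmax] := @seq_max_exists _ f (msupp x).
  by apply: contra nz => /eqP s0; apply/eqP; rewrite [x]monalgE s0 big_nil.
by exists q => [|P]; rewrite mcoeff_neq0 // => /qmax.
Qed.

Lemma exists_mcoeff_neq0 (x : W) : x != 0 -> exists P, x@_P != 0.
Proof. by move=> /(exists_mcoeff_max (fun _ => 0)) [P] ? _; exists P. Qed.

End Supports.

Section OneVariable.
Variables (F : fieldType) (n m : nat) (j : 'I_(n + m)).
Hypothesis charF0 : [pchar F] =i pred0.
Local Notation W := (Walg F n m).
Local Notation I := (Widx n m).

Definition Dc (c : int) (x : W) : W := Wbr (del j) x - c%:~R *: x.

Definition Dkill (d : nat) (S : seq int) (x : W) : W :=
  foldr (fun c => iter d.+1 (Dc c)) x S.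

Lemma Dkill_invariant (R : W -> Prop) d S x :
  (forall c y, R y -> R (Dc c y)) -> R x -> R (Dkill d S x).
Proof. by move=> RDc Rx; elim: S => // c S IH; exact: (iter_invariant d.+1 (RDc c) IH). Qed.

Lemma mcoeff_Dc c x P :
  (Dc c x)@_P = (edeg j P - c)%:~R * x@_P + (xdeg j P + 1)%:~R * x@_(shift j 1 P).
Proof. by rewrite /Dc mcoeffB mcoeff_Wbr_del mcoeffZW intrB; ring. Qed.

Lemma supported_Dc (Q : I -> Prop) c x :
  (forall P, Q (shift j 1 P) -> Q P) -> supported Q x -> supported Q (Dc c x).
Proof. exact: supported_mcoeff2 (mcoeff_Dc c x) (fun _ => id). Qed.

Lemma supported_Dc_xdeg_ge0 c x :
  supported (fun P => 0 <= xdeg j P) x -> supported (fun P => 0 <= xdeg j P) (Dc c x).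
Proof.
move=> Hx P; rewrite mcoeff_Dc; case: (leP 0 (xdeg j P)) => // neg.
rewrite (mcoeff_eq0_supported (P := P) Hx) ?mulr0 ?add0r; last by apply/negP; rewrite -ltNge.
case: (eqVneq x@_(shift j 1 P) 0) => [->|/Hx]; first by rewrite mulr0 eqxx.
by rewrite xdeg_shift_id => ge0; rewrite (_ : xdeg j P + 1 = 0) ?mul0r ?eqxx //; lia.
Qed.

Lemma supported_Dc_edeg (E : int -> Prop) c x :
  supported (fun P => E (edeg j P)) x -> supported (fun P => E (edeg j P)) (Dc c x).
Proof. exact: supported_Dc. Qed.

Lemma supported_Dc_xdeg_le c (d : int) x :
  supported (fun P => xdeg j P <= d) x -> supported (fun P => xdeg j P <= d) (Dc c x).
Proof. by apply: supported_Dc => P; rewrite xdeg_shift_id; lia. Qed.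

Lemma mcoeff_iter_Dc_eq0 c (d : int) x : supported (fun P => xdeg j P <= d) x ->
  forall k P, edeg j P = c -> d < xdeg j P + k%:Z -> (iter k (Dc c) x)@_P = 0.
Proof.
move=> Hx; elim=> [|k IH] P eP dP /=; first by apply: (mcoeff_eq0_supported Hx); lia.
rewrite mcoeff_Dc eP subrr mul0r add0r (IH (shift j 1 P)) ?mulr0 //.
by rewrite xdeg_shift_id; lia.
Qed.

Lemma mcoeff_iter_Dc_top c (d : int) x : supported (fun P => xdeg j P <= d) x ->
  forall k P, xdeg j P = d -> (iter k (Dc c) x)@_P = (edeg j P - c)%:~R ^+ k * x@_P.
Proof.
move=> Hx; elim=> [|k IH] P dP /=; first by rewrite expr0 mul1r.
have Hk := iter_invariant k (@supported_Dc_xdeg_le c d) Hx.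
rewrite mcoeff_Dc (IH P dP) (mcoeff_eq0_supported (P := shift j 1 P) Hk); last first.
  by rewrite xdeg_shift_id dP; lia.
by rewrite mulr0 addr0 exprS mulrA.
Qed.

Lemma mcoeff_iter_Dc_shift c y k P : edeg j P = c -> 0 <= xdeg j P ->
  exists2 e : F, e != 0 & (iter k (Dc c) y)@_P = e * y@_(shift j k%:Z P).
Proof.
elim: k P => [|k IH] P eP P0 /=; first by exists 1; rewrite ?oner_eq0 // mul1r shift0.
rewrite mcoeff_Dc eP subrr mul0r add0r.
have [|e nze ->] := IH (shift j 1 P) eP; first by rewrite xdeg_shift_id; lia.
exists ((xdeg j P + 1)%:~R * e); first by rewrite mulf_neq0 // intr_pchar0_neq0 //; lia.
by rewrite shiftA mulrA -[1 + k%:Z]/(k.+1%:Z).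
Qed.

Lemma mcoeff_Dkill_top (d : nat) S x P :
  supported (fun P => xdeg j P <= d%:Z) x -> xdeg j P = d%:Z ->
  (Dkill d S x)@_P = (\prod_(c <- S) (edeg j P - c)%:~R ^+ d.+1) * x@_P.
Proof.
move=> Hx dP; elim: S => [|c S IH] /=; first by rewrite big_nil mul1r.
rewrite (mcoeff_iter_Dc_top c _ d.+1 dP) ?IH ?big_cons ?mulrA //.
by apply: Dkill_invariant Hx => c' y; apply: supported_Dc_xdeg_le.
Qed.

Lemma supported_Dkill_edeg (d : nat) S x :
  supported (fun P => 0 <= xdeg j P) x -> supported (fun P => xdeg j P <= d%:Z) x ->
  supported (fun P => edeg j P \notin S) (Dkill d S x).
Proof.
move=> H0 Hd; elim: S => [|c S IH] // P nzP.
have Hy0 : supported (fun P => 0 <= xdeg j P) (Dkill d S x).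
  by apply: Dkill_invariant H0 => c' y; apply: supported_Dc_xdeg_ge0.
have Hyd : supported (fun P => xdeg j P <= d%:Z) (Dkill d S x).
  by apply: Dkill_invariant Hd => c' y; apply: supported_Dc_xdeg_le.
have P0 := iter_invariant d.+1 (@supported_Dc_xdeg_ge0 c) Hy0 P nzP.
have PS := iter_invariant d.+1 (@supported_Dc_edeg (fun e => e \notin S) c) IH P nzP.
rewrite inE negb_or PS andbT; apply/eqP => cP; move: nzP.
by rewrite (mcoeff_iter_Dc_eq0 Hyd) ?eqxx //; lia.
Qed.

(* On elements with x_j-degrees in [0, d], ad d_j - c is a nilpotent lowering
   operator on the part with a_j = c and is invertible on the top x_j-degree of
   the other parts. *)
Lemma Dkill_isolate_edeg (d : nat) x q :
  supported (fun P => 0 <= xdeg j P) x -> supported (fun P => xdeg j P <= d%:Z) x ->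
  x@_q != 0 -> xdeg j q = d%:Z ->
  exists S, (Dkill d S x)@_q != 0 /\ supported (fun P => edeg j P = edeg j q) (Dkill d S x).
Proof.
move=> H0 Hd nzq dq.
pose S := [seq edeg j p | p <- msupp x & edeg j p != edeg j q].
exists S; split.
  rewrite mcoeff_Dkill_top // mulf_neq0 // prodf_seq_neq0.
  apply/allP => c /mapP [p]; rewrite mem_filter => /andP [pq _] -> /=.
  by rewrite expf_neq0 // intr_pchar0_neq0 // subr_eq0 eq_sym.
have Hin : supported (fun P => edeg j P \in edeg j q :: S) (Dkill d S x).
  apply: (@Dkill_invariant (supported _)) => [c y|P nzP]; first exact: supported_Dc.
  rewrite inE; case: eqP => //= ne; apply/mapP; exists P => //.
  by rewrite mem_filter -mcoeff_neq0 nzP andbT; apply/eqP.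
move=> P nzP; move: (Hin P nzP).
by rewrite inE (negbTE (@supported_Dkill_edeg d S x H0 Hd P nzP)) orbF => /eqP.
Qed.

Lemma iter_Dc_lower (d : nat) c y q :
  supported (fun P => 0 <= xdeg j P) y -> supported (fun P => xdeg j P <= d%:Z) y ->
  supported (fun P => edeg j P = c) y -> y@_q != 0 -> xdeg j q = d%:Z ->
  iter d (Dc c) y != 0 /\
  supported (fun P => xdeg j P = 0 /\ edeg j P = c) (iter d (Dc c) y).
Proof.
move=> H0 Hd Hc nzq dq; split.
  pose P0 := shift j (- d%:Z) q.
  have [|e nze Ey] := @mcoeff_iter_Dc_shift c y d P0 (Hc q nzq).
    by rewrite xdeg_shift_id dq subrr.
  by apply: (mcoeff_neq0_nonzero (P := P0)); rewrite Ey shiftA addNr shift0 mulf_neq0.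
move=> P nzP.
have P0 := iter_invariant d (@supported_Dc_xdeg_ge0 c) H0 P nzP.
have Pc := iter_invariant d (@supported_Dc_edeg (eq^~ c) c) Hc P nzP.
split=> //; case: (leP (xdeg j P) 0) => dP; first lia.
by move: nzP; rewrite (mcoeff_iter_Dc_eq0 Hd) ?eqxx //; lia.
Qed.

Lemma Dc_reduce (J : W -> Prop) (Q : I -> Prop) x :
  (forall c y, J y -> J (Dc c y)) -> (forall P t, Q (shift j t P) -> Q P) ->
  x != 0 -> J x -> supported Q x -> supported (fun P => 0 <= xdeg j P) x ->
  exists c : int, exists2 z, z != 0 &
    J z /\ supported (fun P => [/\ Q P, xdeg j P = 0 & edeg j P = c]) z.
Proof.
move=> JDc HQ nzx Jx Qx H0.
have [q nzq qmax] := exists_mcoeff_max (xdeg j) nzx.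
pose d := `|xdeg j q|%N.
have dq : xdeg j q = d%:Z by have := H0 q nzq; rewrite /d; lia.
have Hd : supported (fun P => xdeg j P <= d%:Z) x by move=> P /qmax; rewrite dq.
pose R z := [/\ J z, supported Q z, supported (fun P => 0 <= xdeg j P) z
                & supported (fun P => xdeg j P <= d%:Z) z].
have DcR c z : R z -> R (Dc c z).
  case=> Jz Qz Hz0 Hzd; split; [exact: JDc| |exact: supported_Dc_xdeg_ge0|
                                 exact: supported_Dc_xdeg_le].
  by apply: supported_Dc Qz => P; apply: HQ.
have [S [nzy Hy]] := Dkill_isolate_edeg H0 Hd nzq dq.
have [Jy Qy Hy0 Hyd] : R (Dkill d S x) by apply: Dkill_invariant.
have [nzz Hz] := iter_Dc_lower Hy0 Hyd Hy nzy dq.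
have [Jz Qz _ _] := iter_invariant d (DcR (edeg j q)) (And4 Jy Qy Hy0 Hyd).
exists (edeg j q), (iter d (Dc (edeg j q)) (Dkill d S x)) => //; split=> // P nzP.
by have [? ?] := Hz P nzP; split=> //; apply: Qz.
Qed.

Lemma xdel_raise (J : W -> Prop) (Q : I -> Prop) x :
  (forall t y, 0 <= t -> J y -> J (Wbr (xdel j t) y)) -> (forall P t, Q (shift j t P) -> Q P) ->
  x != 0 -> J x -> supported Q x ->
  exists2 y, y != 0 & [/\ J y, supported Q y & supported (fun P => 0 <= xdeg j P) y].
Proof.
move=> Jxdel HQ nzx Jx Qx.
have [q nzq qmin] := exists_mcoeff_max (fun P => - xdeg j P) nzx.
have [q0|qneg] := leP 0 (xdeg j q); first by exists x => //; split => // P /qmin; lia.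
have Hlow : supported (fun P => xdeg j q <= xdeg j P) x by move=> P /qmin; lia.
pose t := 1 - xdeg j q.
exists (Wbr (xdel j t) x); last split.
- apply: (mcoeff_neq0_nonzero (P := shift j (t - 1) q)).
  rewrite mcoeff_Wbr_xdel !shiftA (mcoeff_eq0_supported (P := shift j (t - 1 + - t) q) Hlow).
    rewrite mulr0 add0r (_ : t - 1 + (1 - t) = 0) ?shift0; last lia.
    by rewrite mulf_neq0 // intr_pchar0_neq0 // xdeg_shift_id /=; case: (q.2 == j) => /=; lia.
  by rewrite xdeg_shift_id; lia.
- by apply: Jxdel => //; lia.
- by apply: supported_mcoeff2 Qx => [P|P|P]; [apply: mcoeff_Wbr_xdel|apply: HQ|apply: HQ].
move=> P; rewrite mcoeff_Wbr_xdel; case: (leP 0 (xdeg j P)) => // neg.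
rewrite (mcoeff_eq0_supported (P := shift j (- t) P) Hlow); last by rewrite xdeg_shift_id; lia.
rewrite (mcoeff_eq0_supported (P := shift j (1 - t) P) Hlow); last by rewrite xdeg_shift_id; lia.
by rewrite !mulr0 addr0 eqxx.
Qed.

End OneVariable.

Section Reduction.
Variables (F : fieldType) (n m : nat).
Hypothesis charF0 : [pchar F] =i pred0.
Local Notation W := (Walg F n m).
Local Notation I := (Widx n m).
Local Notation N := (n + m)%N.
Variable J : W -> Prop.
Hypothesis JDc : forall j c y, J y -> J (Dc j c y).
Hypothesis Jxdel : forall j t y, 0 <= t -> J y -> J (Wbr (xdel j t) y).

Lemma reduce_exponents_upto k x : (k <= N)%N -> x != 0 -> J x ->
  exists g : 'I_N -> int, exists2 z, z != 0 &
    J z /\ supported (fun P => forall i : 'I_N, (i < k)%N -> xdeg i P = 0 /\ edeg i P = g i) z.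
Proof.
move=> + nzx Jx; elim: k => [_|k IH kN].
  by exists (fun _ => 0), x => //; split => // P _ i; rewrite ltn0.
have [g [z nzz [Jz Hz]]] := IH (ltnW kN).
pose j : 'I_N := Ordinal kN.
pose Q P := forall i : 'I_N, (i < k)%N -> xdeg i P = 0 /\ edeg i P = g i.
have HQ P t : Q (shift j t P) -> Q P.
  move=> h i ik; rewrite -(@xdeg_shift_ne _ _ i j t P); first exact: h.
  by rewrite -val_eqE /= neq_ltn ik.
have [y nzy [Jy Qy Hy0]] := xdel_raise charF0 (Jxdel j) HQ nzz Jz Hz.
have [c [w nzw [Jw Hw]]] := Dc_reduce charF0 (JDc j) HQ nzy Jy Qy Hy0.
exists (fun i => if i == j then c else g i), w => //; split => // P nzP i.
have [QP dP eP] := Hw P nzP.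
rewrite ltnS leq_eqVlt => /orP [/eqP ik|ik].
  have -> : i = j by apply: val_inj; exact: ik.
  by rewrite eqxx.
have ij : i != j by rewrite -val_eqE /= neq_ltn ik.
by rewrite (negbTE ij); apply: QP.
Qed.

Lemma reduce_to_exponential x : x != 0 -> J x ->
  exists gamma : {ffun 'I_n -> int}, exists2 z, z != 0 &
    J z /\ supported (fun P => P.1 = (gamma, zerov N)) z.
Proof.
move=> nzx Jx; have [g [z nzz [Jz Hz]]] := reduce_exponents_upto (leqnn N) nzx Jx.
exists [ffun t => g (lshift m t)], z => //; split => // -[[a b] k] /Hz H /=.
congr pair; apply/ffunP => t; rewrite !ffunE.
  by have [_] := H (lshift m t) (ltn_ord _); rewrite /edeg /= acoef_lshift.
by have [] := H t (ltn_ord _).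
Qed.

End Reduction.

Definition Pnonneg (n m : nat) (T : pred 'I_(n + m)) : pred (Widx n m) :=
  fun p => [forall k, T k ==> (0 <= p.1.2 k)].

Lemma Pstar_Pnonneg (n m : nat) (T : pred 'I_(n + m)) p : Pstar p -> Pnonneg T p.
Proof. by move=> /forallP p0; apply/forallP => k; rewrite p0 implybT. Qed.

Lemma Pstar_xdel (n m : nat) a (j : 'I_(n + m)) t k :
  0 <= t -> Pstar (a, shiftv j t (zerov (n + m)), k).
Proof.
move=> t0; apply/forallP => i; rewrite /= shiftvE zerovE add0r.
by case: (i == j); rewrite ?mul1r ?mul0r.
Qed.

Section IdealGeneration.
Variables (F : fieldType) (n m : nat).
Hypothesis charF0 : [pchar F] =i pred0.
Local Notation W := (Walg F n m).
Local Notation I := (Widx n m).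
Local Notation N := (n + m)%N.
Variable J : W -> Prop.
Hypothesis JD : forall x y, J x -> J y -> J (x + y).
Hypothesis JZ : forall (c : F) x, J x -> J (c *: x).
Hypothesis JBstar : forall p y, Pstar p -> J y -> J (Wbr (bas p) y).

Lemma J_sub x y : J x -> J y -> J (x - y).
Proof. by move=> Jx Jy; rewrite -scaleN1r; apply: JD => //; apply: JZ. Qed.

Lemma J_Dc j c y : J y -> J (Dc j c y).
Proof.
move=> Jy; apply: J_sub; last exact: JZ.
by apply: JBstar Jy; apply/forallP => k; rewrite /= zerovE.
Qed.

Lemma J_xdel j t y : 0 <= t -> J y -> J (Wbr (xdel j t) y).
Proof. by move=> t0; apply: JBstar; apply: Pstar_xdel. Qed.

Lemma J_bas_single v a (c : F) :
  J v -> (forall P, v@_P = if a == P then c else 0) -> c != 0 -> J (bas a).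
Proof.
move=> Jv Ev nzc; suff -> : bas a = c^-1 *: v by apply: JZ.
apply/malgP => P; rewrite mcoeffZW Ev mcoeff_bas.
by case: eqP => _; rewrite ?mulVf ?mulr0.
Qed.

Lemma J_bas_pair v a b (c d : F) : J v ->
  (forall P, v@_P = (if a == P then c else 0) + (if b == P then d else 0)) ->
  c != 0 -> (d != 0 -> J (bas b)) -> J (bas a).
Proof.
move=> Jv Ev nzc Jb; have [d0|nzd] := eqVneq d 0.
  by apply: (J_bas_single (c := c) Jv) => // P; rewrite Ev d0 if_same addr0.
apply: (@J_bas_single (v - d *: bas b) a c) => // [|P].
  by apply: J_sub => //; apply: JZ; apply: Jb.
rewrite mcoeffB mcoeffZW mcoeff_bas Ev.
by case: (b == P); rewrite ?mulr1 ?addrK ?mulr0 ?addr0 ?subr0.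
Qed.

Lemma mcoeff_Wbr_expN gamma i (z : W) k : supported (fun P => P.1 = (gamma, zerov N)) z ->
  (Wbr (bas (oppv gamma, zerov N, i)) z)@_(zerov n, zerov N, k) =
    z@_(gamma, zerov N, k) * (acoef gamma i)%:~R
  + (i == k)%:R * \sum_(q <- msupp z) z@_q * (acoef gamma q.2)%:~R.
Proof.
move=> Hz; rewrite Wbr_basl mcoeff_sum mulr_sumr.
rewrite -(sum_msupp_pred1 z (fun=> (acoef gamma i)%:~R)) -big_split /=.
apply: eq_big_seq => q; rewrite -mcoeff_neq0 => /Hz.
case: q => [[g d] l] /= [-> ->]; rewrite mcoeffZW mcoeff_Wbr_basis_expN !xpair_eqE !eqxx /=.
by rewrite mulr_natl mulrb mulrDr; case: ifP => _; case: ifP => _; rewrite ?mulr0 ?addr0 ?add0r.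
Qed.

Lemma J_exp_to_const gamma (z : W) :
  z != 0 -> J z -> supported (fun P => P.1 = (gamma, zerov N)) z ->
  exists2 w, w != 0 & J w /\ supported (fun P => P.1 = (zerov n, zerov N)) w.
Proof.
move=> nzz Jz Hz; have [g0|nzg] := eqVneq gamma (zerov n).
  by exists z => //; split => // P /Hz; rewrite g0.
have [t0 gt0] : exists t0, gamma t0 != 0.
  apply/existsP; apply: contraNT nzg => /existsPn g0.
  by apply/eqP/ffunP => t; rewrite zerovE; apply/eqP; rewrite -[_ == _]negbK g0.
pose i := lshift m t0.
have nzi : (acoef gamma i)%:~R != 0 :> F by rewrite acoef_lshift intr_pchar0_neq0.
exists (Wbr (bas (oppv gamma, zerov N, i)) z); last split.
- case: (boolP [exists k, (k != i) && (z@_(gamma, zerov N, k) != 0)]).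
    case/existsP => k /andP [ki nzk]; apply: (mcoeff_neq0_nonzero (P := (zerov n, zerov N, k))).
    by rewrite mcoeff_Wbr_expN // (eq_sym i) (negbTE ki) mul0r addr0 mulf_neq0.
  move/existsPn => single.
  have onlyi q : z@_q != 0 -> q = (gamma, zerov N, i).
    case: q => [[g d] l] nzq; have [eg ed] := Hz _ nzq; rewrite /= in eg ed; subst g d.
    by have := single l; rewrite nzq andbT negbK => /eqP ->.
  have [q nzq] := exists_mcoeff_neq0 nzz; have qi := onlyi q nzq; subst q.
  apply: (mcoeff_neq0_nonzero (P := (zerov n, zerov N, i))).
  rewrite mcoeff_Wbr_expN // eqxx mul1r.
  pose a := (gamma, zerov N, i).
  rewrite (eq_big_seq (fun q => if q == a then z@_q * (acoef gamma i)%:~R else 0)).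
    by rewrite sum_msupp_pred1 -mulr2n -mulr_natr !mulf_neq0 // ((pcharf0P F).1 charF0).
  by move=> q; rewrite -mcoeff_neq0 => /onlyi ->; rewrite eqxx.
- by apply: (JBstar _ Jz); apply/forallP => k; rewrite /= zerovE.
rewrite Wbr_basl; apply: supported_sum => q; rewrite -mcoeff_neq0 => /Hz.
case: q => [[g d] l] /= [-> ->]; apply: supportedZ => P; rewrite mcoeff_Wbr_basis_expN.
by case: ifP => [/eqP <-|_]; case: ifP => [/eqP <-|_] //; rewrite addr0 eqxx.
Qed.

Lemma J_const_to_del (w : W) :
  w != 0 -> J w -> supported (fun P => P.1 = (zerov n, zerov N)) w -> exists k, J (del k).
Proof.
move=> nzw Jw Hw; have [[[a b] k] nzq] := exists_mcoeff_neq0 nzw.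
have [ea eb] := Hw _ nzq; rewrite /= in ea eb; subst a b.
exists k; apply: (J_bas_single (c := - w@_(zerov n, zerov N, k)) (@J_xdel k 1 w isT Jw)).
  case=> [[a b] l]; rewrite mcoeff_Wbr_xdel subrr shift0 addr0 mulr1.
  have -> : (edeg k (a, b, l))%:~R * w@_(shift k (-1) (a, b, l)) = 0.
    case: (eqVneq w@_(shift k (-1) (a, b, l)) 0) => [->|/Hw [/= -> _]]; first by rewrite mulr0.
    by rewrite /edeg acoef0 mulr0z mul0r.
  rewrite add0r; case: (eqVneq w@_(a, b, l) 0) => [w0|/Hw [/= -> ->]].
    by rewrite w0 mulr0; case: eqP => // E; rewrite E w0 oppr0.
  rewrite /xdeg zerovE add0r !xpair_eqE !eqxx /= eq_sym.
  by case: eqP => [->|_]; rewrite ?mulr1z ?mulr0z ?sub0r ?subr0 ?mulN1r ?mul0r.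
by rewrite oppr_eq0.
Qed.

Lemma ideal_contains_del x : x != 0 -> J x -> exists k, J (del k).
Proof.
move=> nzx Jx.
have [gamma [z nzz [Jz Hz]]] := reduce_to_exponential charF0 J_Dc J_xdel nzx Jx.
have [w nzw [Jw Hw]] := J_exp_to_const nzz Jz Hz.
exact: J_const_to_del nzw Jw Hw.
Qed.

End IdealGeneration.

Section NonnegSubalgebra.
Variables (F : fieldType) (n m : nat) (T : pred 'I_(n + m)).
Hypothesis charF0 : [pchar F] =i pred0.
Local Notation W := (Walg F n m).
Local Notation I := (Widx n m).
Local Notation N := (n + m)%N.
Local Notation L := (Pnonneg T).

Lemma Pnonneg_raise a b i k t i' : 0 <= t -> L (a, b, i) -> L (a, shiftv k t b, i').
Proof.
move=> t0 /forallP Lp; apply/forallP => l; move: (Lp l); rewrite /= shiftvE.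
by case: (T l) => //=; case: (l == k) => /=; lia.
Qed.

Lemma Pnonneg_lower a (b : {ffun 'I_N -> int}) k :
  0 < b k -> L (a, b, k) -> L (a, shiftv k (-1) b, k).
Proof.
move=> bk /forallP Lp; apply/forallP => l; move: (Lp l); rewrite /= shiftvE.
by case: (T l) => //=; case: (eqVneq l k) => [->|] /=; lia.
Qed.

Lemma supported_Wbr_basis p q : L p -> L q -> supported L (Wbr_basis F p q).
Proof.
case: p => [[a b] i]; case: q => [[g d] k] /forallP Lp /forallP Lq.
rewrite /Wbr_basis !WbasisE.
apply: supportedD; [apply: supportedD; [apply: supportedD|apply: supportedN]|apply: supportedN];
  apply: supportedZ_bas => nzc; apply/forallP => l; rewrite /= ?ffunE;
  move: (Lp l) (Lq l); rewrite /=.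
- by case: (T l) => //=; lia.
- have di : d i != 0 by apply: contraNneq nzc => ->.
  move: (Lq i); rewrite /=.
  by case: (eqVneq l i) => [->|_] /=; case: (T _) => //=; lia.
- by case: (T l) => //=; lia.
- have bk : b k != 0 by apply: contraNneq nzc => ->.
  move: (Lp k); rewrite /=.
  by case: (eqVneq l k) => [->|_] /=; case: (T _) => //=; lia.
Qed.

Lemma Wsub_Wbr (x y : W) : Wsub L x -> Wsub L y -> Wsub L (Wbr x y).
Proof.
move=> /Wsub_supported Lx /Wsub_supported Ly; apply/Wsub_supported.
apply: supported_sum => p ps; have /Lx Lp : x@_p != 0 by rewrite mcoeff_neq0.
apply: supported_sum => q qs; have /Ly Lq : y@_q != 0 by rewrite mcoeff_neq0.
exact: supportedZ (supported_Wbr_basis Lp Lq).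
Qed.

Lemma Wbr_nonabelian : (0 < N)%N -> exists x y : W, [/\ Wsub L x, Wsub L y & Wbr x y != 0].
Proof.
move=> N0; pose j : 'I_N := Ordinal N0.
exists (del j), (xdel j 1); split.
- apply/Wsub_supported; apply: supported_bas; apply: Pstar_Pnonneg.
  by apply/forallP => k; rewrite /= zerovE.
- by apply/Wsub_supported; apply: supported_bas; apply: Pstar_Pnonneg; apply: Pstar_xdel.
apply: (mcoeff_neq0_nonzero (P := (zerov n, zerov N, j))).
rewrite mcoeff_Wbr_del /edeg /xdeg /= acoef0 zerovE mulr0z mul0r add0r mcoeff_bas eqxx.
by rewrite mulr1 oner_eq0.
Qed.

Section Ideals.
Variable J : W -> Prop.
Hypothesis JD : forall x y, J x -> J y -> J (x + y).
Hypothesis JZ : forall (c : F) x, J x -> J (c *: x).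
Hypothesis JB : forall p y, L p -> J y -> J (Wbr (bas p) y).

Lemma J_Wbr_star p y : Pstar p -> J y -> J (Wbr (bas p) y).
Proof. by move=> /(Pstar_Pnonneg T); apply: JB. Qed.

Lemma J_del_all k0 : J (del k0) -> forall k, J (del k).
Proof.
move=> Jk0 k.
apply: (J_bas_single JZ (c := (- 1)%:~R) (J_Wbr_star (@Pstar_xdel n m (zerov n) k0 1 k isT) Jk0)).
  move=> P; rewrite mcoeff_Wbr_bas_del acoef0 oppr0 mulr0z if_same add0r.
  by rewrite shiftvK shiftv_id zerovE add0r.
exact: intr_pchar0_neq0.
Qed.

Lemma J_xdel1 k : J (del k) -> J (xdel k 1).
Proof.
move=> Jk.
apply: (J_bas_single JZ (c := (- 2)%:~R) (J_Wbr_star (@Pstar_xdel n m (zerov n) k 2 k isT) Jk)).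
  move=> P; rewrite mcoeff_Wbr_bas_del acoef0 oppr0 mulr0z if_same add0r.
  by rewrite shiftvA shiftv_id zerovE add0r.
exact: intr_pchar0_neq0.
Qed.

Lemma J_bas_step a b k : L (a, b, k) -> J (del k) -> J (xdel k 1) ->
  (forall b' : {ffun 'I_N -> int}, (`|b' k| < `|b k|)%N -> L (a, b', k) -> J (bas (a, b', k))) ->
  J (bas (a, b, k)).
Proof.
move=> Lp Jd Jx IH; have [bneg|bpos] := ltP (b k) 0.
  apply: (J_bas_pair JD JZ (b := (a, shiftv k 1 b, k)) (JB Lp Jx)).
  - exact: mcoeff_Wbr_bas_xdel1.
  - by apply: intr_pchar0_neq0 => //; lia.
  - by move=> _; apply: IH; [rewrite shiftv_id; lia|exact: (Pnonneg_raise k k (t := 1) isT Lp)].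
have [a0|anz] := eqVneq (acoef a k) 0.
  have Jv := JB (Pnonneg_raise k k (t := 1) isT Lp) Jd.
  apply: (J_bas_single JZ (c := (- (b k + 1))%:~R) Jv).
    by move=> P; rewrite mcoeff_Wbr_bas_del a0 oppr0 mulr0z if_same add0r shiftvK shiftv_id.
  by apply: intr_pchar0_neq0 => //; lia.
apply: (J_bas_pair JD JZ (b := (a, shiftv k (-1) b, k)) (JB Lp Jd)).
- exact: mcoeff_Wbr_bas_del.
- by rewrite intr_pchar0_neq0 // oppr_eq0.
move=> nzb; have bk : b k != 0 by apply: contraNneq nzb => ->.
by apply: IH; [rewrite shiftv_id; lia|apply: Pnonneg_lower => //; lia].
Qed.

Lemma J_bas_all k0 : J (del k0) -> forall p, L p -> J (bas p).
Proof.
move=> Jk0 [[a b] k]; have Jd := J_del_all Jk0.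
suff Jb M (b' : {ffun 'I_N -> int}) : (`|b' k| < M)%N -> L (a, b', k) -> J (bas (a, b', k)).
  exact: Jb.
elim: M b' => [|M IH] b' bM Lb'; first by rewrite ltn0 in bM.
apply: J_bas_step Lb' (Jd k) (J_xdel1 (Jd k)) _ => b'' lt Lb''.
by apply: IH Lb''; lia.
Qed.

End Ideals.

Lemma Wideal_trivial_or_full (J : W -> Prop) : Wideal L J ->
  (forall x, J x <-> x = 0) \/ (forall x, J x <-> Wsub L x).
Proof.
case=> JL J0 JD JZ JBr.
have JB p y : L p -> J y -> J (Wbr (bas p) y).
  by move=> Lp; apply: JBr; apply/Wsub_supported; apply: supported_bas.
have [[x [Jx nzx]]|none] := classic (exists x, J x /\ x != 0); last first.
  left=> x; split=> [Jx|->]; last exact: J0.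
  by case: (eqVneq x 0) => // nzx; case: none; exists x.
right=> f; split; first exact: JL.
move=> /Wsub_supported Lf.
have JBstar p y : Pstar p -> J y -> J (Wbr (bas p) y) by move=> /(Pstar_Pnonneg T); apply: JB.
have [k Jk] := ideal_contains_del charF0 JD JZ JBstar nzx Jx.
rewrite [f]monalgE big_seq; apply: big_ind => // p; rewrite -mcoeff_neq0 => /[dup] /Lf Lp _.
by rewrite malgU_bas; apply/JZ/(J_bas_all JD JZ JB Jk).
Qed.

Lemma Wsimple_Pnonneg : (0 < N)%N -> @Wsimple F n m L.
Proof.
by move=> N0; split; [exact: Wsub_Wbr|exact: Wbr_nonabelian|exact: Wideal_trivial_or_full].
Qed.

End NonnegSubalgebra.

Lemma Wsimple_eq (F : fieldType) (n m : nat) (P Q : pred (Widx n m)) :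
  @Wsimple F n m P -> P =1 Q -> @Wsimple F n m Q.
Proof.
move=> [WP nonab ideals] PQ.
have EW (f : Walg F n m) : Wsub P f <-> Wsub Q f.
  by split=> h p /h; rewrite PQ.
split.
- by move=> x y /EW Px /EW Py; apply/EW/WP.
- by have [x [y [Px Py nz]]] := nonab; exists x, y; split=> //; apply/EW.
move=> J [JQ J0 JD JZ JB].
have JP : Wideal P J by split=> // [x /JQ /EW //|x y /EW]; apply: JB.
by case: (ideals J JP) => [|Jall]; [left|right=> x; rewrite Jall EW].
Qed.

Theorem theorem1 (F : fieldType) (charF0 : [pchar F]%R =i pred0)
  (n m r s : nat) (Hnm : (0 < n + m)%N) (Hr : (r <= n)%N) (Hs : (s <= m)%N) :
  [/\ @Wsimple F n m (@Pfull n m), @Wsimple F n m (@Prs n m r s) & @Wsimple F n m (@Pstar n m)].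
Proof.
have simple_nonneg T := @Wsimple_Pnonneg F n m T charF0 Hnm.
split.
- by apply: (Wsimple_eq (simple_nonneg pred0)) => p; apply/forallP.
- exact: (Wsimple_eq (simple_nonneg (fun k => (r <= k < n) || (n + s <= k))%N)).
- by apply: (Wsimple_eq (simple_nonneg predT)) => p; apply: eq_forallb.
Qed.
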